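(* Let $C=(V_c,E_c)$ be a cactus graph and let $C_L=(V_c,L_c)$ be a link graph on the same vertex set, where $L_c\subseteq\binom{V_c}{2}$, $L_c\cap E_c=\emptyset$, and each link $l\in L_c$ has a cost $c(l)\in\mathbb{R}_{\ge 0}$. Suppose a feasible solution to the weighted connectivity augmentation problem (WCAP) on $C$ with link set $L_c$ exists. Then every minimum spanning forest $L_{MST}\subseteq L_c$ of $C_L$ (with respect to the costs $c$) is a feasible solution to the WCAP on $C$.
   Context: A cactus graph is a connected graph in which any two cycles have at most one vertex in common; it may carry positive edge weights. A cut of a graph is a bipartition of its vertex set into two non-empty parts; its weight is the total weight of edges with one endpoint in each part, and a minimum cut is a cut of minimum weight. A link $l=uv$ covers a cut if $u$ and $v$ lie on different sides of it (equivalently, adding $l$ to the graph increases the weight of that cut). For the WCAP on $C$ with link set $L_c$, a set $S\subseteq L_c$ is a feasible solution (an augmentation) if adding the links of $S$ to $C$ increases its edge connectivity, i.e. every minimum cut of $C$ is covered by at least one link of $S$. A minimum spanning forest of $C_L$ is a minimum-cost subset of $L_c$ forming a spanning tree of each connected component of $C_L$. *)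

(* Graphs on a finite vertex type V; edges and links are
   unordered pairs, represented as 2-element sets {set V}. *)
From HB Require Import structures.
From mathcomp Require Import all_boot all_order all_algebra.
Set Implicit Arguments. Unset Strict Implicit. Unset Printing Implicit Defensive.
Import Order.TTheory GRing.Theory Num.Theory.
Local Open Scope ring_scope.

Section Graphs.
Variable V : finType.

Definition pair_set (E : {set {set V}}) : Prop :=
  forall e, e \in E -> #|e| = 2%N.

Definition adj (E : {set {set V}}) : rel V :=
  fun x y => [set x; y] \in E.

Definition connected_graph (E : {set {set V}}) : Prop :=
  forall x y : V, connect (adj E) x y.

Definition is_cycle (E : {set {set V}}) (p : seq V) : Prop :=
  [/\ uniq p, (3 <= size p)%N & cycle (adj E) p].

Definition cycle_edges (p : seq V) : {set {set V}} :=
  [set [set x; next p x] | x in p].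

Definition cactus (E : {set {set V}}) : Prop :=
  [/\ pair_set E, connected_graph E &
      forall p q : seq V, is_cycle E p -> is_cycle E q ->
        cycle_edges p != cycle_edges q ->
        (#|[set x in p | x \in q]| <= 1)%N].

(* a cut is a bipartition (X, V \ X) with both parts non-empty *)
Definition is_cut (X : {set V}) : bool := (X != set0) && (X != setT).

Definition crosses (e : {set V}) (X : {set V}) : bool := #|e :&: X| == 1%N.

Variable R : realFieldType.

Definition cut_weight (E : {set {set V}}) (w : {set V} -> R) (X : {set V}) : R :=
  \sum_(e in E | crosses e X) w e.

Definition min_cut (E : {set {set V}}) (w : {set V} -> R) (X : {set V}) : Prop :=
  is_cut X /\ forall Y, is_cut Y -> cut_weight E w X <= cut_weight E w Y.

Definition covers (l : {set V}) (X : {set V}) : bool := crosses l X.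

Definition wcap_feasible (E : {set {set V}}) (w : {set V} -> R)
    (L S : {set {set V}}) : Prop :=
  S \subset L /\
  forall X, min_cut E w X -> exists2 l, l \in S & covers l X.

Definition cost (c : {set V} -> R) (S : {set {set V}}) : R := \sum_(l in S) c l.

Definition forest (F : {set {set V}}) : Prop := forall p, ~ is_cycle F p.

Definition spanning_forest (L F : {set {set V}}) : Prop :=
  [/\ F \subset L, forest F &
      forall x y, connect (adj L) x y -> connect (adj F) x y].

Definition min_spanning_forest (L : {set {set V}}) (c : {set V} -> R)
    (F : {set {set V}}) : Prop :=
  spanning_forest L F /\
  forall F', spanning_forest L F' -> cost c F <= cost c F'.

End Graphs.

(* A link covering a minimum cut joins a vertex on one side of the cut to a
   vertex on the other; a spanning forest of the link graph connects these two
   vertices by a path, and some edge of that path must leave the side it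
   starts on, so it covers the cut as well. *)
From HB Require Import structures.
From mathcomp Require Import all_boot all_order all_algebra.
Set Implicit Arguments. Unset Strict Implicit. Unset Printing Implicit Defensive.
Import Order.TTheory GRing.Theory Num.Theory.
Local Open Scope ring_scope.

Lemma connect_exit (T : finType) (e : rel T) (X : {set T}) (u v : T) :
  connect e u v -> u \in X -> v \notin X ->
  exists x y, [/\ e x y, x \in X & y \notin X].
Proof.
move=> /connectP [p + ->] {v}; elim: p u => [|z p IHp] u /=.
  by move=> _ ->.
case/andP=> euz pz uX lastX.
have [zX | zNX] := boolP (z \in X); first exact: IHp zX lastX.
by exists u, z.
Qed.

Lemma crosses_pair (T : finType) (X : {set T}) (x y : T) :
  x \in X -> y \notin X -> crosses [set x; y] X.
Proof.
move=> xX yNX; rewrite /crosses.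
suff -> : [set x; y] :&: X = [set x] by rewrite cards1.
apply/setP => z; rewrite !inE.
have [->|_] := eqVneq z x; first by rewrite xX.
by have [->|] := eqVneq z y; rewrite ?(negbTE yNX).
Qed.

Lemma crossesP (T : finType) (X l : {set T}) :
  #|l| = 2%N -> crosses l X ->
  exists x y, [/\ l = [set x; y], x \in X & y \notin X].
Proof.
move=> l2 lX1; have lDX1 : #|l :\: X| == 1%N.
  by rewrite -(eqn_add2l 1) -{1}(eqP lX1) cardsID l2.
have [x lXx] := cards1P lX1; have [y lDXy] := cards1P lDX1.
exists x, y; split.
- by rewrite -(setID l X) lXx lDXy.
- by have /setIP[] : x \in l :&: X by rewrite lXx set11.
- by have /setDP[] : y \in l :\: X by rewrite lDXy set11.
Qed.

Section SpanningForest.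
Variables (V : finType) (L F : {set {set V}}).
Hypotheses (pairL : pair_set L) (spanF : spanning_forest L F).

Lemma spanning_forest_covers (l X : {set V}) :
  l \in L -> covers l X -> exists2 f, f \in F & covers f X.
Proof.
move=> lL /(crossesP (pairL lL)) [u [v [luv uX vNX]]].
have [_ _ connF] := spanF.
have uv_conn : connect (adj F) u v by apply/connF/connect1; rewrite /adj -luv.
have [x [y [xyF xX yNX]]] := connect_exit uv_conn uX vNX.
by exists [set x; y]; last exact: crosses_pair.
Qed.

Lemma spanning_forest_feasible (R : realFieldType) (E : {set {set V}})
    (w : {set V} -> R) (S : {set {set V}}) :
  wcap_feasible E w L S -> wcap_feasible E w L F.
Proof.
case=> SL coverS; have [FL _ _] := spanF; split=> // X /coverS [l lS lX].
exact: spanning_forest_covers (subsetP SL l lS) lX.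
Qed.

End SpanningForest.

Theorem theorem2 (R : realFieldType) (V : finType)
    (Ec : {set {set V}}) (w : {set V} -> R)
    (Lc : {set {set V}}) (c : {set V} -> R) :
  cactus Ec ->
  (forall e, e \in Ec -> 0 < w e) ->
  pair_set Lc ->
  [disjoint Lc & Ec] ->
  (forall l, l \in Lc -> 0 <= c l) ->
  (exists S, wcap_feasible Ec w Lc S) ->
  forall LMST, min_spanning_forest Lc c LMST ->
    wcap_feasible Ec w Lc LMST.
Proof.
move=> _ _ pairL _ _ [S feasS] LMST [spanLMST _].
exact: spanning_forest_feasible feasS.
Qed.
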